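(* Let $B:=\{\omega\in X\mid\xi(\omega)\in\chi_{\mathcal{G}}(\omega)\}$. Then $B\in\mathcal{B}_X$ and $\mathbb{P}(B)=1$.
   Context: $X$ is a Polish space with Borel $\sigma$-algebra $\mathcal{B}_X$, $\mathbb{P}$ a probability measure on $(X,\mathcal{B}_X)$, $\mathcal{G}\subseteq\mathcal{B}_X$ a countably generated sub-$\sigma$-algebra, and $\xi:X\to\mathbb{R}^d$ Borel measurable. For $\omega\in X$ let $A_\omega=\bigcap\{A\in\mathcal{G}\mid\omega\in A\}$. Fix a proper regular conditional probability $\mathbb{P}_{\mathcal{G}}:X\times\mathcal{B}_X\to[0,1]$, i.e.: (a) $\mathbb{P}_{\mathcal{G}}(\omega,\cdot)$ is a probability measure for every $\omega$; (b) for each $B\in\mathcal{B}_X$, $\mathbb{P}_{\mathcal{G}}(\cdot,B)$ is $\mathcal{G}$-measurable and a version of $E_{\mathbb{P}}[\mathbf{1}_B\mid\mathcal{G}]$; (c) there is $N\in\mathcal{G}$ with $\mathbb{P}(N)=0$ such that $\mathbb{P}_{\mathcal{G}}(\omega,B)=\mathbf{1}_B(\omega)$ for all $\omega\in X\setminus N$, $B\in\mathcal{G}$, and $\mathbb{P}_{\mathcal{G}}(\omega,A_\omega)=1$ for $\omega\in X\setminus N$; (d) $\mathbb{P}(A\cap B)=\int_A\mathbb{P}_{\mathcal{G}}(\omega,B)\,\mathbb{P}(d\omega)$ for $A\in\mathcal{G}$, $B\in\mathcal{B}_X$. Define $P_\xi(\omega,C)=\mathbb{P}_{\mathcal{G}}(\omega,\{\tilde\omega\in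 A_\omega\mid\xi(\tilde\omega)\in C\})$ for Borel $C\subseteq\mathbb{R}^d$, and the random set $\chi_{\mathcal{G}}(\omega)=\{x\in\mathbb{R}^d\mid P_\xi(\omega,B_\varepsilon(x))>0\ \forall\varepsilon>0\}$ for $\omega\in X\setminus N$ (the support of $P_\xi(\omega,\cdot)$), and $\chi_{\mathcal{G}}(\omega)=\mathbb{R}^d$ for $\omega\in N$; $B_\varepsilon(x)$ is the open ball of radius $\varepsilon$ centered at $x$. *)

From HB Require Import structures.
From mathcomp Require Import all_boot all_order all_algebra.
From mathcomp Require Import all_classical all_reals all_analysis measurable_realfun.
Set Implicit Arguments. Unset Strict Implicit. Unset Printing Implicit Defensive.
Import Order.TTheory GRing.Theory Num.Theory.
Import numFieldNormedType.Exports.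
Local Open Scope classical_set_scope.
Local Open Scope ring_scope.

Definition polish (R : realType) (X : topologicalType) : Prop :=
  exists dist : X -> X -> R,
    [/\ (forall x y, 0 <= dist x y),
        (forall x y, dist x y = 0 <-> x = y),
        (forall x y, dist x y = dist y x) &
        (forall x y z, dist x z <= dist x y + dist y z)] /\
    [/\
        (forall U : set X, open U <->
           (forall x, U x -> exists2 e : R, 0 < e &
              [set y | dist x y < e] `<=` U)),
        (forall u : nat -> X,
           (forall e : R, 0 < e -> exists N : nat,
              forall m n, (N <= m)%N -> (N <= n)%N -> dist (u m) (u n) < e) ->
           exists l : X, forall e : R, 0 < e -> exists N : nat,
              forall n, (N <= n)%N -> dist (u n) l < e) &
        (exists S : set X, countable S /\
           forall x (e : R), 0 < e -> exists2 s, S s & dist x s < e)].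

Definition borelType (X : ptopologicalType) := g_sigma_algebraType (@open X).

Definition borel_Rd (R : realType) (d : nat) : set (set 'rV[R]_d) :=
  <<s [set U : set 'rV[R]_d | open U] >>.

Definition eball (R : realType) (d : nat) (x : 'rV[R]_d) (eps : R)
  : set 'rV[R]_d :=
  [set y | \sum_(i < d) (y ord0 i - x ord0 i) ^+ 2 < eps ^+ 2].

Definition atom (X : Type) (G : set (set X)) (w : X) : set X :=
  \bigcap_(A in [set A | G A /\ A w]) A.

Definition countably_generated (X : Type) (G : set (set X)) : Prop :=
  exists C : nat -> set X, G = <<s range C >>.

Definition Pxi (R : realType) (d : nat) (X : ptopologicalType)
  (PG : X -> probability (borelType X) R) (G : set (set X))
  (xi : X -> 'rV[R]_d) (w : X) (C : set 'rV[R]_d) : \bar R :=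
  PG w [set w' | atom G w w' /\ C (xi w')].

(** chi_G(omega): support of P_xi(omega, .) off N, and R^d on N. *)
Definition chiG (R : realType) (d : nat) (X : ptopologicalType)
  (PG : X -> probability (borelType X) R) (G : set (set X))
  (xi : X -> 'rV[R]_d) (N : set X) (w : X) : set 'rV[R]_d :=
  [set x | N w \/
     (~ N w /\ forall eps : R, 0 < eps -> (0 < Pxi PG G xi w (eball x eps))%E)].

From HB Require Import structures.
From mathcomp Require Import all_boot all_order all_algebra.
From mathcomp Require Import all_classical all_reals all_analysis measurable_realfun.
From mathcomp Require Import lra.
Import Order.TTheory GRing.Theory Num.Theory.
Import numFieldNormedType.Exports.
Local Open Scope classical_set_scope.
Local Open Scope ring_scope.

(* Rational boxes U_k form a countable base of R^d.  Off the null set N the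
   kernel PG w is carried by the atom of w, which is measurable because G is
   countably generated; so xi w lies outside the support chi_G(w) exactly when
   some U_k contains xi w while PG(w, xi^-1 U_k) = 0.  The set Z_k where
   PG(., xi^-1 U_k) vanishes belongs to G, hence by the disintegration property
   P(xi^-1 U_k /\ Z_k) = int_{Z_k} PG(., xi^-1 U_k) dP = 0.  Thus B is N together
   with the complement of a countable union of P-null sets. *)

Section euclidean_boxes.
Context {R : realType} {d : nat}.
Implicit Types (x y : 'rV[R]_d) (a b : 'I_d -> R).

Lemma eball_center x e : 0 < e -> eball x e x.
Proof.
move=> e0; rewrite /eball /= big1 ?exprn_gt0 // => i _.
by rewrite subrr expr0n.
Qed.

Lemma open_eball x e : open (eball x e).
Proof.
apply: (@open_comp _ _ (fun y => \sum_(i < d) (y ord0 i - x ord0 i) ^+ 2)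
  [set t | t < e ^+ 2]); last exact: open_lt.
move=> y _; apply: continuous_big => [|i _ z]; first exact: add_continuous.
have coordB : continuous (fun z : 'rV[R]_d => z ord0 i - x ord0 i).
  by move=> u; apply: continuousB; [exact: coord_continuous|exact: cst_continuous].
exact: (continuousM (coordB z) (coordB z)).
Qed.

Definition box a b : set 'rV[R]_d := [set y | forall i, a i < y ord0 i < b i].

Lemma box_eball a b y : box a b y -> exists2 e, 0 < e & eball y e `<=` box a b.
Proof.
move=> aby; pose gap i := Num.min (y ord0 i - a i) (b i - y ord0 i).
pose e := \big[Num.min/1]_i gap i.
have e0 : 0 < e.
  apply: lt_bigmin => // i _; have /andP[ai ib] := aby i.
  by rewrite /gap lt_min !subr_gt0 ai ib.
exists e => // z zy i; have := bigmin_le 1 i gap; rewrite -/e le_min => /andP[ea eb].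
have : (z ord0 i - y ord0 i) ^+ 2 < e ^+ 2.
  apply: le_lt_trans zy; rewrite (bigD1 i) //= lerDl.
  by apply: sumr_ge0 => j _; exact: sqr_ge0.
rewrite !expr2 => lt_sq; apply/andP; split; nra.
Qed.

Lemma open_box a b : open (box a b).
Proof.
rewrite openE => y /box_eball[e e0 sub]; apply: (filterS sub).
by apply: open_nbhs_nbhs; split; [exact: open_eball|exact: eball_center].
Qed.

Definition rat_box (f : {ffun 'I_d -> rat * rat}) : set 'rV[R]_d :=
  box (fun i => ratr (f i).1) (fun i => ratr (f i).2).

(* Endpoints within del = eps / (d + 1) of x work, since d * del^2 < eps^2. *)
Lemma eball_rat_box x eps : 0 < eps ->
  exists f, rat_box f x /\ rat_box f `<=` eball x eps.
Proof.
move=> eps0; pose n : R := d%:R + 1; have n0 : 0 < n by rewrite ltr_wpDl.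
have [del del0 epsE] : exists2 del, 0 < del & eps = del * n.
  by exists (eps / n); rewrite ?divr_gt0 ?divfK ?gt_eqF.
have near_rat i : exists q : rat * rat,
    x ord0 i - del < ratr q.1 < x ord0 i /\ x ord0 i < ratr q.2 < x ord0 i + del.
  have /rat_in_itvoo[q1] : x ord0 i - del < x ord0 i by rewrite gtrBl.
  have /rat_in_itvoo[q2] : x ord0 i < x ord0 i + del by rewrite ltrDl.
  by rewrite !in_itv /= => h2 h1; exists (q1, q2).
have [g gP] := choice near_rat.
exists (finfun g); split=> [i|z zf]; rewrite ?ffunE.
  by have [/andP[_ ->] /andP[-> _]] := gP i.
apply: (le_lt_trans (y := \sum_(i < d) del ^+ 2)).
  apply: ler_sum => i _; have /andP[] := zf i; rewrite ffunE.
  by have [/andP[? ?] /andP[? ?]] := gP i; rewrite !expr2 => ? ?; nra.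
rewrite sumr_const card_ord -mulr_natr epsE exprMn ltr_pM2l ?exprn_gt0 //.
by rewrite expr2 /n; nra.
Qed.

Definition rat_box_seq (k : nat) : set 'rV[R]_d :=
  if unpickle k is Some f then rat_box f else set0.

Lemma open_rat_box_seq k : open (rat_box_seq k).
Proof.
by rewrite /rat_box_seq; case: unpickle => [f|]; [exact: open_box|exact: open0].
Qed.

Lemma eball_pos_iff_rat_box_seq_pos (nu : set 'rV[R]_d -> \bar R) x :
  (forall A B, open A -> open B -> A `<=` B -> (nu A <= nu B)%E) ->
  (forall e, 0 < e -> (0 < nu (eball x e))%E) <->
  (forall k, rat_box_seq k x -> (0 < nu (rat_box_seq k))%E).
Proof.
move=> nuS; split=> [pos k | pos e e0].
  rewrite /rat_box_seq; case: unpickle => [f|//] /box_eball[e e0 sub].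
  by apply: lt_le_trans (nuS _ _ (open_eball _ _) (open_box _ _) sub); exact: pos.
have [f [fx sub]] := eball_rat_box x _ e0.
have ukE : rat_box_seq (pickle f) = rat_box f by rewrite /rat_box_seq pickleK.
apply: lt_le_trans (nuS _ _ (open_rat_box_seq (pickle f)) (open_eball _ _) _).
  by apply: pos; rewrite ukE.
by rewrite ukE.
Qed.

End euclidean_boxes.

Lemma atom_generated {T : Type} {G : set (set T)} {C : nat -> set T} (w : T) :
  sigma_algebra setT G -> G = <<s range C >> ->
  atom G w = \bigcap_n [set w' | C n w' <-> C n w].
Proof.
move=> sG GC; have GCn n : G (C n) by rewrite GC; apply: sub_gen_smallest; exists n.
apply/seteqP; split=> [w' atom_w' n _|w' w'D A [GA Aw]].
  have GnCn : G (~` C n) by rewrite -setTD; case: sG => _ + _; exact.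
  split=> [Cw'|Cw]; last exact: atom_w'.
  by apply: contrapT => nCw; apply: (atom_w' (~` C n)).
pose S := [set A : set T | A w' <-> A w].
have sS : sigma_algebra setT S.
  split=> [|B [BS SB] | F SF]; rewrite /S /=.
  - by [].
  - by split=> -[_ nB]; split=> // ?; apply: nB; [exact: SB|exact: BS].
  - by split=> -[n _ Fn]; exists n => //; apply/(SF n).
have : <<s range C >> `<=` S by apply: smallest_sub => // _ [n _ <-]; exact: w'D.
by rewrite -GC => /(_ A GA)[_]; apply.
Qed.

Lemma measurable_atom d (T : measurableType d) (G : set (set T)) (w : T) :
  sigma_algebra setT G -> G `<=` measurable -> countably_generated G ->
  measurable (atom G w).
Proof.
move=> sG GM [C GC]; rewrite (atom_generated w sG GC).
apply: bigcapT_measurable => n.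
have mCn : measurable (C n) by apply: GM; rewrite GC; apply: sub_gen_smallest; exists n.
have [Cw|nCw] := pselect (C n w).
  by rewrite (_ : [set _ | _] = C n) //; apply/seteqP; split=> w' /=; tauto.
rewrite (_ : [set _ | _] = ~` C n); first exact: measurableC.
by apply/seteqP; split=> w' /=; tauto.
Qed.

Lemma probability_setI_full d (T : measurableType d) (R : realType)
  (mu : probability T R) (A S : set T) :
  measurable A -> measurable S -> mu A = 1%E -> mu (A `&` S) = mu S.
Proof.
move=> mA mS muA1; rewrite [RHS](measureDI mu mS mA) setIC.
have muCA0 : mu (~` A) = 0%E by rewrite probability_setC // muA1 subee.
rewrite (@subset_measure0 _ _ _ mu (S `\` A) (~` A)) ?add0e //.
- exact: measurableD.
- exact: measurableC.
Qed.

Section kernel_null_set.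
Context {d : measure_display} {T : measurableType d} {R : realType}.
Variables (P : probability T R) (G : set (set T)) (K : T -> probability T R) (S : set T).

Lemma kernel_eq0_in_sigma :
  sigma_algebra setT G ->
  @measurable_fun _ _ (g_sigma_algebraType G) _ setT
    (fun w : g_sigma_algebraType G => K w S : \bar R) ->
  G [set w | K w S = 0%E].
Proof.
move=> sG KSm; have := KSm measurableT [set 0%E] (emeasurable_set1 _).
by rewrite setTI -[X in _ -> X _](sigma_algebra_id sG).
Qed.

Lemma disintegration_kernel_eq0 :
  G [set w | K w S = 0%E] ->
  (forall A, G A -> P (A `&` S) = (\int[P]_(w in A) K w S)%E) ->
  P (S `&` [set w | K w S = 0%E]) = 0%E.
Proof.
by move=> GZ dis; rewrite setIC dis //; apply: integral0_eq => w /=.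
Qed.

End kernel_null_set.

Lemma chiG_rat_box_seq (R : realType) (d : nat) (X : ptopologicalType)
  (PG : X -> probability (borelType X) R) (G : set (set X))
  (xi : X -> 'rV[R]_d) (N : set X) (w : X) (x : 'rV[R]_d) :
  ~ N w -> PG w (atom G w) = 1%E -> measurable (atom G w : set (borelType X)) ->
  (forall U, open U -> measurable (xi @^-1` U : set (borelType X))) ->
  chiG PG G xi N w x <->
  (forall k, rat_box_seq k x -> (0 < PG w (xi @^-1` rat_box_seq k))%E).
Proof.
move=> nNw atom1 matom xiO.
have PxiE e : Pxi PG G xi w (eball x e) = PG w (xi @^-1` eball x e).
  by apply: probability_setI_full => //; apply: xiO; exact: open_eball.
rewrite -(eball_pos_iff_rat_box_seq_pos (fun C => PG w (xi @^-1` C))).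
  split=> [[//|[_ pos]] e e0|pos]; first by rewrite -PxiE pos.
  by right; split=> // e e0; rewrite PxiE pos.
move=> A B oA oB AB; apply: le_measure; rewrite ?inE; last exact: preimage_subset.
  by apply: xiO.
by apply: xiO.
Qed.

Theorem lemma5p5 (R : realType) (d : nat) (X : ptopologicalType)
  (P : probability (borelType X) R)
  (G : set (set X))
  (xi : X -> 'rV[R]_d)
  (PG : X -> probability (borelType X) R)
  (N : set X) :
  polish R X ->
  (* G is a countably generated sub-sigma-algebra of B_X *)
  sigma_algebra setT G ->
  G `<=` (measurable : set (set (borelType X))) ->
  countably_generated G ->
  (* xi is Borel measurable *)
  (forall C, borel_Rd C -> measurable (xi @^-1` C : set (borelType X))) ->
  (* (b) P_G(., B) is G-measurable *)
  (forall B : set (borelType X), measurable B ->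
     @measurable_fun _ _ (g_sigma_algebraType G) _ setT
       (fun w : g_sigma_algebraType G => PG w B : \bar R)) ->
  (* (c) properness off the P-null set N in G *)
  G N -> P N = 0%E ->
  (forall w, ~ N w ->
     (forall B, G B -> PG w B = (\1_B w)%:E) /\ PG w (atom G w) = 1%E) ->
  (* (d) (and (b)): PG(., B) is a version of E[1_B | G] *)
  (forall A B : set (borelType X), G A -> measurable B ->
     P (A `&` B) = (\int[P]_(w in A) PG w B)%E) ->
  let B := [set w | chiG PG G xi N w (xi w)] in
  measurable (B : set (borelType X)) /\ P B = 1%E.
Proof.
move=> _ sG GM GC xiB PGm GN PN0 proper dis B.
have xiO U : open U -> measurable (xi @^-1` U : set (borelType X)).
  by move=> oU; apply: xiB; exact: sub_gen_smallest.
pose U k : set 'rV[R]_d := rat_box_seq k.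
have mU k : measurable (xi @^-1` U k : set (borelType X)).
  by apply: xiO; exact: open_rat_box_seq.
pose Z k := [set w | PG w (xi @^-1` U k) = 0%E].
have GZ k : G (Z k).
  by apply: (kernel_eq0_in_sigma (T := borelType X) G PG) => //; exact: PGm.
pose bad := \bigcup_k (xi @^-1` U k `&` Z k).
have mUZ k : measurable (xi @^-1` U k `&` Z k : set (borelType X)).
  by apply: measurableI; [exact: mU|exact: GM].
have mbad : measurable (bad : set (borelType X)) by exact: bigcupT_measurable.
have Pbad : P bad = 0%E.
  apply/negligibleP => //; apply: negligible_bigcup => k; apply/negligibleP => //.
  exact: (disintegration_kernel_eq0 (T := borelType X) P G PG _ (GZ k)
    (fun A GA => dis A _ GA (mU k))).
have BE : B = N `|` ~` bad.
  apply/funext => w; apply/propext; rewrite /B /=.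
  have [Nw|nNw] := pselect (N w); first by split=> _; left.
  have [_ atom1] := proper w nNw.
  rewrite chiG_rat_box_seq //; last exact: measurable_atom.
  split=> [pos|[//|nbad] k Uk]; first by right=> -[k _ [/pos + Zk]]; rewrite Zk ltxx.
  rewrite lt0e measure_ge0 andbT; apply/eqP => PG0; apply: nbad; by exists k.
have mB : measurable (B : set (borelType X)).
  by rewrite BE; apply: measurableU; [exact: GM|exact: measurableC].
have Pgood : P (~` bad) = 1%E by rewrite probability_setC // Pbad sube0.
split=> //; rewrite BE setUC measureU0 //; [exact: measurableC|exact: GM].
Qed.
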